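(* Let $G\subset \mathrm{GL}_n(\mathbb{C})$ be a complex reflection group, let $L=\mathbb{C}(x_1,\dots,x_n)$ with the action of $G$ described in the context, and let $\boldsymbol{\phi}=(\phi_1,\dots,\phi_n)$ be an $n$-tuple of fundamental invariants of $G$. Put $K=\mathbb{C}(z_1,\dots,z_n)$ with $z_i=\phi_i(\mathbf{x})$, so $K=L^G\subseteq L$, and let $\delta_i$ ($1\le i\le n$) denote the unique derivation of $L$ extending $\partial/\partial z_i$ on $K$. Let $J_{\boldsymbol{\phi}}=\bigl(\partial\phi_i/\partial x_j\bigr)_{1\le i,j\le n}$ be the Jacobian matrix, and define $A_i:=\delta_i(J_{\boldsymbol{\phi}})\,J_{\boldsymbol{\phi}}^{-1}\in\mathfrak{gl}_n(L)$ for $1\le i\le n$, where $\delta_i$ is applied entrywise. Then: (1) $A_i\in\mathfrak{gl}_n(K)$ for each $1\le i\le n$; (2) $\delta_i(A_j)-\delta_j(A_i)=A_iA_j-A_jA_i$ for all $1\le i,j\le n$; and (3) $L$ is a Picard-Vessiot extension of $K$ for the linear differential system $\{\delta_i(\mathbf{y})=A_i\mathbf{y}\mid 1\le i\le n\}$.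
   Context: A complex reflection is a matrix $M\in\mathrm{GL}_n(\mathbb{C})$ of finite order that fixes pointwise some hyperplane (codimension-one subspace); a complex reflection group is a finite subgroup of $\mathrm{GL}_n(\mathbb{C})$ generated by complex reflections. Such $G$ acts on $S=\mathbb{C}[x_1,\dots,x_n]$ and on $L=\mathbb{C}(x_1,\dots,x_n)$ by $\gamma_M(f)(\mathbf{x})=f(\mathbf{x}\cdot M^{-\top})$, where $\mathbf{x}=(x_1,\dots,x_n)$ is a row vector. A set of fundamental invariants is a tuple $\phi_1,\dots,\phi_n$ of homogeneous, algebraically independent $G$-invariant polynomials with $S^G=\mathbb{C}[\phi_1,\dots,\phi_n]$ (these exist for complex reflection groups), and then $L^G=\mathbb{C}(\phi_1,\dots,\phi_n)$, with $L/K$ a finite Galois extension, so each derivation $\partial/\partial z_i$ of $K$ extends uniquely to a derivation $\delta_i$ of $L$, and these pairwise commute. For a field $F$ with commuting derivations $\delta_1,\dots,\delta_n$, its constants are $C_F=\{c\in F\mid \delta_i(c)=0\ \forall i\}$. Given an integrable system $\{\delta_i(\mathbf{y})=A_i\mathbf{y}\}$ with $A_i\in\mathfrak{gl}_N(K)$, a differential field extension $L\supseteq K$ is a Picard-Vessiot extension for it if $C_L=C_K$ and $L$ is generated as a field over $K$ by the entries of some $U\in\mathrm{GL}_N(L)$ with $\delta_i(U)=A_iU$ for all $i$. *)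

From HB Require Import structures.
From mathcomp Require Import all_boot all_algebra.
From mathcomp Require Import reals.
From mathcomp.real_closed Require Import complex.
From mathcomp Require Import mpoly.

Set Implicit Arguments.
Unset Strict Implicit.
Unset Printing Implicit Defensive.

Import GRing.Theory.
Local Open Scope ring_scope.

Section Defs.
Variables (C : fieldType) (n : nat).

Definition ratfun := {fraction {mpoly C[n]}}.
Definition toL (p : {mpoly C[n]}) : ratfun := @FracField.tofrac _ p.

(* gamma_M(f)(x) = f(x * M^{-T}), x a row vector:
   x_i is replaced by \sum_j x_j (M^{-T})_{j i} = \sum_j (M^{-1})_{i j} x_j. *)
Definition act_mpoly (M : 'M[C]_n) (f : {mpoly C[n]}) : {mpoly C[n]} :=
  comp_mpoly [tuple \sum_(j < n) (invmx M) i j *: 'X_j | i < n] f.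

(* A complex reflection: finite order, fixes pointwise some hyperplane of C^n
   (column vectors v with M v = v; the rows of H span the hyperplane, as
   row vectors w with w M^T = w). *)
Definition is_reflection (M : 'M[C]_n) : Prop :=
  [/\ M \in unitmx,
      exists k : nat, (0 < k)%N /\ M ^+ k = 1%:M
    & exists H : 'M[C]_n, \rank H = n.-1 /\ H *m M^T = H].

(* A finite subgroup G (given by a finite list of its elements) of GL_n(C)
   generated by complex reflections (every element is a product of
   reflections lying in G). *)
Definition complex_reflection_group (G : seq 'M[C]_n) : Prop :=
  [/\ 1%:M \in G,
      {in G &, forall A B, A *m B \in G},
      {in G, forall A, A \in unitmx /\ invmx A \in G}
    & forall A, A \in G -> exists rs : seq 'M[C]_n,
        [/\ {in rs, forall r, r \in G}, {in rs, forall r, is_reflection r}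
          & A = foldr mulmx 1%:M rs]].

Definition invariant (G : seq 'M[C]_n) (f : {mpoly C[n]}) : Prop :=
  forall M, M \in G -> act_mpoly M f = f.

Definition fundamental_invariants (G : seq 'M[C]_n)
    (phi : n.-tuple {mpoly C[n]}) : Prop :=
  [/\ forall i, exists d : nat, tnth phi i \is d.-homog,
      forall i, invariant G (tnth phi i),
      forall q : {mpoly C[n]}, comp_mpoly phi q = 0 -> q = 0
    &
      forall f, invariant G f <-> exists q : {mpoly C[n]}, f = comp_mpoly phi q].

Definition evphi (phi : n.-tuple {mpoly C[n]}) (p : {mpoly C[n]}) : ratfun :=
  toL (comp_mpoly phi p).

Definition inK (phi : n.-tuple {mpoly C[n]}) (f : ratfun) : Prop :=
  exists p q : {mpoly C[n]}, evphi phi q != 0 /\ f = evphi phi p / evphi phi q.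

Definition is_derivation (d : ratfun -> ratfun) : Prop :=
  forall a b, d (a + b) = d a + d b /\ d (a * b) = d a * b + a * d b.

Definition extends_dz (phi : n.-tuple {mpoly C[n]}) (i : 'I_n)
    (d : ratfun -> ratfun) : Prop :=
  forall p q : {mpoly C[n]}, evphi phi q != 0 ->
    d (evphi phi p / evphi phi q)
    = evphi phi (mderiv i p * q - p * mderiv i q) / evphi phi (q ^+ 2).

Definition jacobian (phi : n.-tuple {mpoly C[n]}) : 'M[ratfun]_n :=
  \matrix_(i < n, j < n) toL (mderiv j (tnth phi i)).

Definition is_subfield (F : ratfun -> Prop) : Prop :=
  [/\ F 0, F 1,
      forall a b, F a -> F b -> F (a - b) /\ F (a * b)
    & forall a, F a -> F a^-1].

Definition picard_vessiot (K : ratfun -> Prop) (delta : 'I_n -> ratfun -> ratfun)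
    (N : nat) (A : 'I_n -> 'M[ratfun]_N) : Prop :=
  (* C_L = C_K *)
  (forall c, (forall i, delta i c = 0) <-> (K c /\ forall i, delta i c = 0)) /\
  (* L = K(entries of U) for a fundamental matrix U in GL_N(L) *)
  exists U : 'M[ratfun]_N,
    [/\ U \in unitmx,
        forall i, map_mx (delta i) U = A i *m U
      & forall F : ratfun -> Prop, is_subfield F -> (forall x, K x -> F x) ->
          (forall a b, F (U a b)) -> forall x, F x].

End Defs.

(* By the chain rule δ_i(φ_a) = Σ_k ∂φ_a/∂x_k · δ_i(x_k) = [a = i], i.e. J·(δ_i x_k)_{k,i} = 1,
   so J is invertible with inverse (δ_i x_k).  A derivation, or more generally a σ-twisted
   derivation for a field automorphism σ, that vanishes on C and on φ_1, ..., φ_n therefore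
   vanishes on x_1, ..., x_n (because σ(J) is invertible), hence on L.  Applied to
   [δ_i, δ_j] this gives commutation, and the integrability condition (2) follows from the
   Leibniz rule.  Applied to γ∘δ_i - δ_i∘γ for γ in G it shows that G commutes with the δ_i;
   since γ(J^{-1}) = M^{-1}·J^{-1} with M^{-1} constant, every A_i is G-invariant, and
   G-invariant rational functions lie in K (1).  For (3), U = J is a fundamental matrix; the
   common constants of the δ_i are the common constants of ∂/∂x_j = Σ_i (∂φ_i/∂x_j) δ_i,
   i.e. C; and Euler's identity J·x = (deg φ_a · φ_a)_a shows x = J^{-1}(deg φ · φ) ∈ K(J). *)

From Pilot Require Import Defs.
From HB Require Import structures.
From mathcomp Require Import all_boot all_algebra.
From mathcomp Require Import reals.
From mathcomp.real_closed Require Import complex.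
From mathcomp Require Import mpoly.
From mathcomp Require Import ring.
Import GRing.Theory.
Local Open Scope ring_scope.
Set Implicit Arguments.
Unset Strict Implicit.

Section FractionRepr.
Variable T : idomainType.
Local Open Scope quotient_scope.

Lemma tofrac_reprE (f : {fraction T}) :
  f = FracField.tofrac \n_(repr f) / FracField.tofrac \d_(repr f).
Proof.
rewrite -{1}(reprK f); set r := repr f.
have dn : FracField.tofrac \d_r != 0 by rewrite tofrac_eq0 denom_ratioP.
apply: (mulIf dn); rewrite mulfVK //.
rewrite /FracField.tofrac; unlock FracField.tofrac.
rewrite -[X in X = _]FracField.pi_mul; apply/eqmodP => /=.
rewrite FracField.equivfE /FracField.mulf /=.
by rewrite !numden_Ratio ?(oner_neq0, mulf_neq0, denom_ratioP) // !mulr1 mulrC.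
Qed.

End FractionRepr.

Lemma invmxM (R : comUnitRingType) (n : nat) (A B : 'M[R]_n) :
  A \in unitmx -> B \in unitmx -> invmx (A *m B) = invmx B *m invmx A.
Proof.
move=> Au Bu; have ABu : A *m B \in unitmx by rewrite unitmx_mul Au Bu.
apply: (can_inj (mulKmx ABu)); rewrite mulmxV // -mulmxA (mulmxA B).
by rewrite mulmxV // mul1mx mulmxV.
Qed.

Lemma map_mx_deriv_mul (R : pzRingType) (D : R -> R) :
    {morph D : a b / a + b} -> (forall a b, D (a * b) = D a * b + a * D b) ->
  forall m k l (A : 'M[R]_(m, k)) (B : 'M[R]_(k, l)),
    map_mx D (A *m B) = map_mx D A *m B + A *m map_mx D B.
Proof.
move=> DD DM m k l A B; apply/matrixP => i j; rewrite !mxE.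
have D0 : D 0 = 0 by apply: (addrI (D 0)); rewrite -DD !addr0.
rewrite (big_morph D DD D0) -big_split; apply: eq_bigr => x _.
by rewrite DM !mxE.
Qed.

Section Ratfun.
Variables (C : fieldType) (n : nat).
Local Notation L := (ratfun C n).
Local Notation toL := (@toL C n).

HB.instance Definition _ := GRing.RMorphism.copy toL (@FracField.tofrac {mpoly C[n]}).

Lemma toL_eq0 p : (toL p == 0) = (p == 0). Proof. exact: tofrac_eq0. Qed.

Lemma toL_inj : injective toL.
Proof. by move=> p q /eqP; rewrite /toL tofrac_eq => /eqP. Qed.

Lemma ratfunE (f : L) : exists p q, q != 0 /\ f = toL p / toL q.
Proof.
by exists \n_(repr f), \d_(repr f); split; [exact: denom_ratioP | exact: tofrac_reprE].
Qed.

Lemma evphi1 (phi : n.-tuple {mpoly C[n]}) : evphi phi 1 = 1.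
Proof. by rewrite /evphi !rmorph1. Qed.

Lemma mpoly_ringind (P : {mpoly C[n]} -> Prop) :
    (forall c, P c%:MP) -> (forall i, P 'X_i) ->
    (forall p q, P p -> P q -> P (p + q)) -> (forall p q, P p -> P q -> P (p * q)) ->
  forall p, P p.
Proof.
move=> PC PX PD PM p; elim/mpolyind: p => [|c m p _ _ Pp]; first by rewrite -mpolyC0.
apply: PD => //; rewrite -mul_mpolyC mpolyXE_id; apply: (PM) => //.
apply: (big_ind P); [by rewrite -mpolyC1 | exact: PM | move=> i _].
by elim: (m i) => [|k IH]; rewrite ?expr0 -?mpolyC1 // exprS; apply: PM.
Qed.

Lemma mderivXU (i j : 'I_n) : ('X_i : {mpoly C[n]})^`M(j) = (i == j)%:R.
Proof.
rewrite mderivX mnm1E; case: eqP => [->|_]; last by rewrite scale0r.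
by rewrite -{1}[U_(j)%MM]add0m addmK mpolyX0 scale1r.
Qed.

Section SkewDerivation.
Variables (s : {rmorphism L -> L}) (D : L -> L).
Hypothesis DD : {morph D : a b / a + b}.
Hypothesis DM : forall a b, D (a * b) = D a * s b + s a * D b.
Hypothesis DC : forall c, D (toL c%:MP) = 0.

Lemma skew_deriv_chain p : D (toL p) = \sum_j s (toL p^`M(j)) * D (toL 'X_j).
Proof.
elim/mpoly_ringind: p => [c|i|p q Dp Dq|p q Dp Dq].
- by rewrite DC big1 // => j _; rewrite mderivC !rmorph0 mul0r.
- rewrite (bigD1 i) //= mderivXU eqxx !rmorph1 mul1r big1 ?addr0 // => j /negPf ji.
  by rewrite mderivXU eq_sym ji !rmorph0 mul0r.
- rewrite rmorphD DD Dp Dq -big_split /=; apply: eq_bigr => j _.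
  by rewrite mderivD !rmorphD mulrDl.
- rewrite rmorphM DM Dp Dq mulr_suml mulr_sumr -big_split /=; apply: eq_bigr => j _.
  by rewrite mderivM !rmorphD !rmorphM mulrDl mulrAC mulrA.
Qed.

Lemma skew_deriv_eq0 : (forall j, D (toL 'X_j) = 0) -> forall f, D f = 0.
Proof.
move=> DX f; have DP p : D (toL p) = 0.
  by rewrite skew_deriv_chain big1 // => j _; rewrite DX mulr0.
have [p [q [q0 ->]]] := ratfunE f.
have tq0 : toL q != 0 by rewrite toL_eq0.
have := DM (toL p / toL q) (toL q); rewrite divfK // !DP mulr0 addr0 => /esym/eqP.
by rewrite mulf_eq0 fmorph_eq0 (negPf tq0) orbF => /eqP.
Qed.

Lemma skew_deriv_eq0_jacobian (phi : n.-tuple {mpoly C[n]}) :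
    map_mx s (jacobian phi) \in unitmx -> (forall a, D (toL (tnth phi a)) = 0) ->
  forall f, D f = 0.
Proof.
move=> Ju Dphi; apply: skew_deriv_eq0 => k.
pose v : 'cV[L]_n := \col_k D (toL 'X_k).
suff /matrixP /(_ k 0) : v = 0 by rewrite !mxE.
have Jv0 : map_mx s (jacobian phi) *m v = 0.
  apply/matrixP => a z; rewrite !mxE -[RHS](Dphi a) skew_deriv_chain.
  by apply: eq_bigr => j _; rewrite !mxE.
by rewrite -[v]mul1mx -(mulVmx Ju) -mulmxA Jv0 mulmx0.
Qed.

End SkewDerivation.
End Ratfun.

Section LinearAction.
Variables (C : fieldType) (n : nat).
Local Notation L := (ratfun C n).
Local Notation toL := (@toL C n).
Local Notation act := (@act_mpoly C n).

HB.instance Definition _ (M : 'M[C]_n) :=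
  GRing.RMorphism.copy (act M) (comp_mpoly [tuple \sum_(j < n) (invmx M) i j *: 'X_j | i < n]).

Lemma act_mpolyC M c : act M c%:MP = c%:MP.
Proof. exact: comp_mpolyC. Qed.

Lemma act_mpolyZ M c p : act M (c *: p) = c *: act M p.
Proof. exact: comp_mpolyZ. Qed.

Lemma act_mpolyX M i : act M 'X_i = \sum_j (invmx M) i j *: 'X_j.
Proof. by rewrite /act_mpoly comp_mpolyXU -tnth_nth tnth_mktuple. Qed.

Lemma act_mpoly1 : act 1%:M =1 id.
Proof.
move=> f; rewrite /act_mpoly invmx1 -[RHS]comp_mpoly_id; congr comp_mpoly.
apply: eq_from_tnth => i; rewrite !tnth_mktuple (bigD1 i) //= mxE eqxx scale1r.
by rewrite big1 ?addr0 // => j /negPf ji; rewrite mxE eq_sym ji scale0r.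
Qed.

Lemma act_mpolyM M N f : M \in unitmx -> N \in unitmx ->
  act M (act N f) = act (M *m N) f.
Proof.
move=> Mu Nu; elim/mpoly_ringind: f => [c|i|p q Mp Mq|p q Mp Mq].
- by rewrite !act_mpolyC.
- rewrite !act_mpolyX raddf_sum invmxM //=.
  under eq_bigr => j _ do rewrite act_mpolyZ act_mpolyX scaler_sumr.
  rewrite exchange_big /=; apply: eq_bigr => k _.
  by rewrite mxE scaler_suml; apply: eq_bigr => j _; rewrite scalerA.
- by rewrite !rmorphD /= Mp Mq.
- by rewrite !rmorphM /= Mp Mq.
Qed.

Lemma act_mpolyK M : M \in unitmx -> cancel (act M) (act (invmx M)).
Proof. by move=> Mu f; rewrite act_mpolyM ?unitmx_inv // mulVmx // act_mpoly1. Qed.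

Lemma act_mpoly_eq0 M p : M \in unitmx -> (act M p == 0) = (p == 0).
Proof. by move=> Mu; rewrite -{1}(rmorph0 (act M)) (can_eq (act_mpolyK Mu)). Qed.

Local Open Scope quotient_scope.

(* The identity when M is singular, so that act_ratfun M is a ring morphism for every M. *)
Definition act_ratfun (M : 'M[C]_n) (f : L) : L :=
  if M \in unitmx then toL (act M \n_(repr f)) / toL (act M \d_(repr f)) else f.

Variable M : 'M[C]_n.
Hypothesis Mu : M \in unitmx.

Lemma act_ratfun_frac p q : q != 0 ->
  act_ratfun M (toL p / toL q) = toL (act M p) / toL (act M q).
Proof.
move=> q0; rewrite /act_ratfun Mu; set f := toL p / toL q.
have d0 : \d_(repr f) != 0 := denom_ratioP _.
have actL0 r : r != 0 -> toL (act M r) != 0 by rewrite toL_eq0 act_mpoly_eq0.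
have nd : \n_(repr f) * q = p * \d_(repr f).
  apply: toL_inj; apply/eqP; rewrite !rmorphM -eqr_div ?toL_eq0 //.
  by rewrite /f -tofrac_reprE.
by apply/eqP; rewrite eqr_div ?actL0 // -!rmorphM nd.
Qed.

Lemma act_ratfun_toL p : act_ratfun M (toL p) = toL (act M p).
Proof.
by rewrite -[toL p]divr1 -(rmorph1 toL) act_ratfun_frac ?oner_neq0 // !rmorph1 divr1.
Qed.

End LinearAction.

Section ActRatfunMorphism.
Variables (C : fieldType) (n : nat) (M : 'M[C]_n).
Local Notation act := (act_ratfun M).

Lemma act_ratfun_is_zmod_morphism : zmod_morphism act.
Proof.
have [Mu|Mn] := boolP (M \in unitmx); last by move=> f g; rewrite /act_ratfun (negPf Mn).
have fracB (F : fieldType) (a b c d : F) : b != 0 -> d != 0 ->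
    a / b - c / d = (a * d - c * b) / (b * d).
  by move=> b0 d0; rewrite -mulNr addf_div // mulNr.
move=> f g; have [p [q [q0 ->]]] := ratfunE f; have [p' [q' [q'0 ->]]] := ratfunE g.
rewrite fracB ?toL_eq0 // -!rmorphM -rmorphB !act_ratfun_frac ?mulf_neq0 //.
by rewrite fracB ?toL_eq0 ?act_mpoly_eq0 // !rmorphB !rmorphM.
Qed.

Lemma act_ratfun_is_monoid_morphism : monoid_morphism act.
Proof.
have [Mu|Mn] := boolP (M \in unitmx); last by split=> [|f g]; rewrite /act_ratfun (negPf Mn).
split=> [|f g]; first by have := act_ratfun_toL Mu 1; rewrite !rmorph1.
have [p [q [q0 ->]]] := ratfunE f; have [p' [q' [q'0 ->]]] := ratfunE g.
by rewrite mulf_div -!rmorphM !act_ratfun_frac ?mulf_neq0 // mulf_div !rmorphM.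
Qed.

HB.instance Definition _ :=
  GRing.isZmodMorphism.Build (ratfun C n) (ratfun C n) act act_ratfun_is_zmod_morphism.
HB.instance Definition _ :=
  GRing.isMonoidMorphism.Build (ratfun C n) (ratfun C n) act act_ratfun_is_monoid_morphism.

End ActRatfunMorphism.

Section InvariantFractions.
Variables (C : fieldType) (n : nat) (G : seq 'M[C]_n).
Local Notation toL := (@toL C n).
Local Notation act := (@act_mpoly C n).
Hypothesis G1 : 1%:M \in G.
Hypothesis GM : {in G &, forall A B, A *m B \in G}.
Hypothesis GV : {in G, forall A, A \in unitmx /\ invmx A \in G}.

Lemma perm_mulmx_group N : N \in G -> perm_eq [seq N *m A | A <- undup G] (undup G).
Proof.
move=> GN; have [Nu GNi] := GV GN.
apply: uniq_perm => [||A]; first 2 last.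
- apply/mapP/idP => [[B GB ->]|GA]; first by rewrite mem_undup GM // -mem_undup.
  by exists (invmx N *m A); rewrite ?mulKVmx // mem_undup GM // -mem_undup.
- by rewrite (map_inj_uniq (can_inj (mulKmx Nu))) undup_uniq.
- exact: undup_uniq.
Qed.

Lemma invariant_prod_act (q : {mpoly C[n]}) :
  Defs.invariant G (\prod_(M <- undup G) act M q).
Proof.
move=> N GN; rewrite rmorph_prod -[RHS](perm_big _ (perm_mulmx_group GN)) big_map.
rewrite !big_seq; apply: eq_bigr => M; rewrite mem_undup => GM'.
by rewrite /= act_mpolyM //; [case: (GV GN) | case: (GV GM')].
Qed.

(* Multiply p / q above and below by the conjugates of q, making the denominator the
   invariant norm of q. *)
Lemma invariant_ratfun_quotient f : (forall M, M \in G -> act_ratfun M f = f) ->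
  exists p q, [/\ q != 0, Defs.invariant G p, Defs.invariant G q & f = toL p / toL q].
Proof.
move=> Gf; have [p [q [q0 fpq]]] := ratfunE f.
pose Q := \prod_(M <- undup G) act M q.
pose R := \prod_(M <- rem 1%:M (undup G)) act M q.
have QE : Q = q * R by rewrite /Q (big_rem 1%:M) ?mem_undup //= act_mpoly1.
have Q0 : Q != 0.
  rewrite prodf_seq_neq0; apply/allP => M; rewrite mem_undup => GM' /=.
  by rewrite act_mpoly_eq0 //; case: (GV GM').
have R0 : R != 0 by move: Q0; rewrite QE mulf_eq0 negb_or => /andP[].
have fE : f = toL (p * R) / toL Q.
  by rewrite fpq QE !rmorphM -mulf_div divff ?mulr1 // toL_eq0.
exists (p * R), Q; split=> //; last exact: invariant_prod_act.
move=> N GN; have [Nu _] := GV GN; apply: toL_inj.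
apply: (mulIf (x := (toL Q)^-1)); first by rewrite invr_eq0 toL_eq0.
by rewrite -[RHS]fE -(Gf N GN) fE act_ratfun_frac // (invariant_prod_act q GN).
Qed.

Lemma invariant_ratfun_inK (phi : n.-tuple {mpoly C[n]}) :
    (forall f, Defs.invariant G f -> exists q, f = comp_mpoly phi q) ->
  forall f, (forall M, M \in G -> act_ratfun M f = f) -> inK phi f.
Proof.
move=> SG f /invariant_ratfun_quotient[p [q [q0 /SG[p' ->] /SG[q' qE] ->]]].
by exists p', q'; rewrite /evphi -qE toL_eq0.
Qed.

End InvariantFractions.

Section PartialDerivatives.
Variables (C : fieldType) (n : nat).
Local Notation L := (ratfun C n).
Local Notation toL := (@toL C n).

Lemma msize_mderiv_lt (p : {mpoly C[n]}) j :
  p^`M(j) != 0 -> (msize p^`M(j) < msize p)%N.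
Proof.
move=> dp0; rewrite -(mlead_deg dp0).
have : (mlead p^`M(j) + U_(j))%MM \in msupp p.
  rewrite mcoeff_msupp; apply: contraTneq (mlead_supp dp0) => p0.
  by rewrite mcoeff_msupp mcoeff_deriv p0 mul0rn eqxx.
by move/msize_mdeg_lt; rewrite mdegD mdeg1 addn1.
Qed.

Lemma mpolyX_euler (m : 'X_{1..n}) :
  \sum_j 'X_j * ('X_[m] : {mpoly C[n]})^`M(j) = (mdeg m)%:R *: 'X_[m].
Proof.
rewrite mdegE natr_sum scaler_suml; apply: eq_bigr => j _; rewrite mderivX -scalerAr.
have [->|mj] := posnP (m j); first by rewrite !scale0r.
rewrite mulrC -mpolyXD submK //; apply/mnm_lepP => k.
by rewrite mnm1E; case: eqP => [<-|].
Qed.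

Lemma mpoly_euler (p : {mpoly C[n]}) d :
  p \is d.-homog -> \sum_j 'X_j * p^`M(j) = d%:R *: p.
Proof.
move=> /dhomogP hd; rewrite {1}[p]mpolyE.
under eq_bigr => j _ do rewrite raddf_sum mulr_sumr.
rewrite exchange_big /= {3}[p]mpolyE scaler_sumr !big_seq; apply: eq_bigr => m pm.
under eq_bigr => j _ do rewrite mderivZ -scalerAr.
by rewrite -scaler_sumr mpolyX_euler hd // scalerA mulrC -scalerA.
Qed.

Hypothesis C0 : [pchar C] =i pred0.

Lemma mderiv_eq0_const (p : {mpoly C[n]}) :
  (forall j, p^`M(j) = 0) -> p = (p@_0%MM)%:MP.
Proof.
move=> dp0; apply/mpolyP => m; rewrite mcoeffC.
have [->|m0] := eqVneq m 0%MM; first by rewrite mulr1.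
rewrite mulr0; have [i mi] : exists i, (0 < m i)%N.
  apply/existsP; apply: contraR m0 => /existsPn mi0.
  by apply/eqP/mnmP => i; rewrite mnm0E; apply/eqP; rewrite -leqn0 leqNgt mi0.
have Uim : (U_(i) <= m)%MM by apply/mnm_lepP => k; rewrite mnm1E; case: eqP => [<-|].
have := mcoeff_deriv i (m - U_(i))%MM p; rewrite dp0 mcoeff0 submK // => /esym/eqP.
by rewrite -mulr_natr mulf_eq0 ((pcharf0P C).1 C0) orbF => /eqP.
Qed.

(* If f = p / q is killed by every E_j, then E_j p = f E_j q, so f = E_j p / E_j q
   whenever E_j q != 0: induction on the size of the denominator. *)
Lemma partial_deriv_eq0_const (E : 'I_n -> L -> L) :
    (forall j a b, E j (a * b) = E j a * b + a * E j b) ->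
    (forall j p, E j (toL p) = toL p^`M(j)) ->
  forall f, (forall j, E j f = 0) -> exists c : C, f = toL c%:MP.
Proof.
move=> EM EtoL f Ef.
suff sizeP k (p q : {mpoly C[n]}) :
    q != 0 -> (msize q < k)%N -> f = toL p / toL q -> exists c : C, f = toL c%:MP.
  by have [p [q [q0 fE]]] := ratfunE f; apply: (sizeP _ p q q0 (ltnSn _) fE).
elim: k p q => // k IH p q q0; rewrite ltnS => qk fE.
have fq : toL p = f * toL q by rewrite fE divfK ?toL_eq0.
have dpq j : toL p^`M(j) = f * toL q^`M(j) by rewrite -!EtoL fq EM Ef mul0r add0r.
have [j dq0|dq0] := pickP (fun j => q^`M(j) != 0).
  apply: (IH (p^`M(j)) (q^`M(j))) => //; last by rewrite dpq mulfK ?toL_eq0.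
  exact: leq_trans (msize_mderiv_lt dq0) qk.
have {}dq0 j : q^`M(j) = 0 by apply/eqP; rewrite -[_ == _]negbK dq0.
have dp0 j : p^`M(j) = 0 by apply: toL_inj; rewrite dpq dq0 !rmorph0 mulr0.
rewrite (mderiv_eq0_const dq0) mpolyC_eq0 in q0.
exists (p@_0%MM / q@_0%MM); rewrite fE {1}(mderiv_eq0_const dp0) {1}(mderiv_eq0_const dq0).
apply: (mulIf (x := toL (q@_0%MM)%:MP)); first by rewrite toL_eq0 mpolyC_eq0.
by rewrite mulfVK ?toL_eq0 ?mpolyC_eq0 // -rmorphM -mpolyCM mulfVK.
Qed.

End PartialDerivatives.

Section Subfield.
Variables (C : fieldType) (n : nat) (F : ratfun C n -> Prop).
Local Notation L := (ratfun C n).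
Local Notation toL := (@toL C n).
Hypothesis F_subfield : is_subfield F.

Lemma subfieldB a b : F a -> F b -> F (a - b).
Proof. by case: F_subfield => _ _ FBM _ Fa Fb; case: (FBM a b Fa Fb). Qed.

Lemma subfieldM a b : F a -> F b -> F (a * b).
Proof. by case: F_subfield => _ _ FBM _ Fa Fb; case: (FBM a b Fa Fb). Qed.

Lemma subfieldV a : F a -> F a^-1.
Proof. by case: F_subfield => _ _ _; apply. Qed.

Lemma subfieldN a : F a -> F (- a).
Proof. by case: F_subfield => F0 _ _ _ Fa; rewrite -sub0r; apply: subfieldB. Qed.

Lemma subfieldD a b : F a -> F b -> F (a + b).
Proof. by move=> Fa Fb; rewrite -[b]opprK; apply/subfieldB/subfieldN. Qed.

Lemma subfield_sign k : F ((-1) ^+ k).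
Proof.
case: F_subfield => _ F1 _ _; elim: k => [|k IH]; rewrite ?expr0 // exprS.
exact/subfieldM/IH/subfieldN.
Qed.

Lemma subfield_sum (I : Type) (r : seq I) (P : pred I) (G : I -> L) :
  (forall i, F (G i)) -> F (\sum_(i <- r | P i) G i).
Proof.
move=> FG; case: F_subfield => F0 _ _ _.
by apply: big_ind => //; exact: subfieldD.
Qed.

Lemma subfield_prod (I : Type) (r : seq I) (P : pred I) (G : I -> L) :
  (forall i, F (G i)) -> F (\prod_(i <- r | P i) G i).
Proof.
move=> FG; case: F_subfield => _ F1 _ _.
by apply: big_ind => //; exact: subfieldM.
Qed.

Lemma subfield_det m (A : 'M[L]_m) : (forall i j, F (A i j)) -> F (\det A).
Proof.
move=> FA; apply: subfield_sum => s; apply: subfieldM; first exact: subfield_sign.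
exact: subfield_prod.
Qed.

Lemma subfield_invmx m (A : 'M[L]_m) :
  (forall i j, F (A i j)) -> forall i j, F (invmx A i j).
Proof.
move=> FA i j; rewrite /invmx; case: ifP => // _; rewrite !mxE.
apply: subfieldM; first exact/subfieldV/subfield_det.
rewrite /cofactor; apply: subfieldM; first exact: subfield_sign.
by apply: subfield_det => a b; rewrite !mxE.
Qed.

Lemma subfield_ratfun :
  (forall c, F (toL c%:MP)) -> (forall j, F (toL 'X_j)) -> forall f, F f.
Proof.
move=> FC FX f; have [p [q [_ ->]]] := ratfunE f.
have Fpoly r : F (toL r).
  elim/mpoly_ringind: r => // [r r' Fr Fr'|r r' Fr Fr'].
    by rewrite rmorphD; apply: subfieldD.
  by rewrite rmorphM; apply: subfieldM.
by apply: subfieldM => //; apply: subfieldV.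
Qed.

End Subfield.

Section Connection.
Variables (C : fieldType) (n : nat) (phi : n.-tuple {mpoly C[n]}).
Variable delta : 'I_n -> ratfun C n -> ratfun C n.
Local Notation L := (ratfun C n).
Local Notation toL := (@toL C n).
Local Notation J := (jacobian phi).
Hypothesis delta_der : forall i, is_derivation (delta i).
Hypothesis delta_dz : forall i, extends_dz phi i (delta i).

Lemma deltaD i : {morph delta i : a b / a + b}.
Proof. by move=> a b; case: (delta_der i a b). Qed.

Lemma deltaM i a b : delta i (a * b) = delta i a * b + a * delta i b.
Proof. by case: (delta_der i a b). Qed.

Lemma delta_evphi i p : delta i (evphi phi p) = evphi phi p^`M(i).
Proof.
have d1 : (1 : {mpoly C[n]})^`M(i) = 0 by rewrite -mpolyC1 mderivC.
rewrite -[evphi phi p]divr1 -(evphi1 phi) delta_dz ?evphi1 ?oner_neq0 //.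
by rewrite d1 mulr0 subr0 mulr1 expr1n evphi1 divr1.
Qed.

Lemma delta_toLC i c : delta i (toL c%:MP) = 0.
Proof.
have := delta_evphi i c%:MP.
by rewrite /evphi comp_mpolyC mderivC rmorph0 => ->; rewrite rmorph0.
Qed.

Lemma delta_nat i k : delta i k%:R = 0.
Proof. by rewrite -(rmorph_nat toL) -mpolyC_nat delta_toLC. Qed.

Lemma delta0 i : delta i 0 = 0.
Proof. by rewrite -(rmorph0 toL) -mpolyC0 delta_toLC. Qed.

Lemma delta_sum i (I : Type) (r : seq I) (P : pred I) (F : I -> L) :
  delta i (\sum_(k <- r | P k) F k) = \sum_(k <- r | P k) delta i (F k).
Proof. exact: (big_morph _ (deltaD i) (delta0 i)). Qed.

Lemma delta_phi i a : delta i (toL (tnth phi a)) = (a == i)%:R.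
Proof.
have := delta_evphi i 'X_a; rewrite /evphi comp_mpolyXU -tnth_nth => ->.
by rewrite mderivXU !rmorph_nat.
Qed.

Lemma delta_chain i p : delta i (toL p) = \sum_k toL p^`M(k) * delta i (toL 'X_k).
Proof. exact: (skew_deriv_chain (s := idfun) (deltaD i) (deltaM i) (delta_toLC i)). Qed.

Definition dx_dz : 'M[L]_n := \matrix_(k, i) delta i (toL 'X_k).

Lemma jacobian_dx_dz : J *m dx_dz = 1%:M.
Proof.
apply/matrixP => a i; rewrite !mxE -delta_phi delta_chain.
by apply: eq_bigr => k _; rewrite !mxE.
Qed.

Lemma unitmx_jacobian : J \in unitmx.
Proof. exact: (@mulmx1_unit L n _ _ jacobian_dx_dz).1. Qed.

Lemma invmx_jacobian : invmx J = dx_dz.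
Proof. by rewrite -[LHS]mulmx1 -jacobian_dx_dz (mulKmx unitmx_jacobian). Qed.

Lemma delta_comm i j f : delta i (delta j f) = delta j (delta i f).
Proof.
apply/eqP; rewrite -subr_eq0; apply/eqP; move: f.
pose D f := delta i (delta j f) - delta j (delta i f).
apply: (@skew_deriv_eq0_jacobian _ _ idfun D _ _ _ phi).
- by move=> a b; rewrite /D !deltaD addrACA opprD.
- by move=> a b; rewrite /D !deltaM !deltaD !deltaM /=; ring.
- by move=> c; rewrite /D !delta_toLC subrr.
- by rewrite map_mx_id; first exact: unitmx_jacobian.
- by move=> a; rewrite /D !delta_phi !delta_nat subrr.
Qed.

Definition connection i : 'M[L]_n := map_mx (delta i) J *m invmx J.

Lemma map_delta_invmx_jacobian i :
  map_mx (delta i) (invmx J) = - (invmx J *m map_mx (delta i) J *m invmx J).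
Proof.
have Ju := unitmx_jacobian.
have : map_mx (delta i) (J *m invmx J) = 0.
  by rewrite (mulmxV Ju); apply/matrixP => a b; rewrite !mxE delta_nat.
rewrite map_mx_deriv_mul; [|exact: deltaD|exact: deltaM] => /eqP.
rewrite addr_eq0 => /eqP /(congr1 (mulmx (invmx J))).
by rewrite mulmxN (mulKmx Ju) mulmxA => ->; rewrite opprK.
Qed.

Lemma connection_integrable i j :
  map_mx (delta i) (connection j) - map_mx (delta j) (connection i)
  = connection i *m connection j - connection j *m connection i.
Proof.
have mapM k := map_mx_deriv_mul (deltaD k) (deltaM k).
have ddJ : map_mx (delta i) (map_mx (delta j) J) = map_mx (delta j) (map_mx (delta i) J).
  by apply/matrixP => a b; rewrite !mxE delta_comm.
rewrite /connection !mapM !map_delta_invmx_jacobian ddJ !mulmxN !mulmxA.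
by rewrite opprB addrC addrA subrK.
Qed.

Section GaloisAction.
Variable M : 'M[C]_n.
Hypothesis Mu : M \in unitmx.
Hypothesis M_phi : forall a, act_mpoly M (tnth phi a) = tnth phi a.
Local Notation act := (act_ratfun M).

Lemma act_ratfun_toLC c : act (toL c%:MP) = toL c%:MP.
Proof. by rewrite act_ratfun_toL // act_mpolyC. Qed.

Lemma act_ratfun_delta i f : act (delta i f) = delta i (act f).
Proof.
apply/eqP; rewrite eq_sym -subr_eq0; apply/eqP; move: f.
pose D f := delta i (act f) - act (delta i f).
apply: (@skew_deriv_eq0_jacobian _ _ (act : {rmorphism L -> L}) D _ _ _ phi).
- by move=> a b; rewrite /D !rmorphD !deltaD rmorphD addrACA opprD.
- by move=> a b; rewrite /D !rmorphM !deltaM rmorphD !rmorphM /=; ring.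
- by move=> c; rewrite /D act_ratfun_toLC delta_toLC rmorph0 subrr.
- rewrite map_unitmx; exact: unitmx_jacobian.
- by move=> a; rewrite /D act_ratfun_toL // M_phi !delta_phi rmorph_nat subrr.
Qed.

Definition invmx_const : 'M[L]_n := map_mx (fun c => toL c%:MP) (invmx M).

Lemma act_ratfun_dx_dz : map_mx act dx_dz = invmx_const *m dx_dz.
Proof.
apply/matrixP => k i; rewrite !mxE act_ratfun_delta act_ratfun_toL // act_mpolyX.
rewrite rmorph_sum delta_sum; apply: eq_bigr => j _.
by rewrite -mul_mpolyC rmorphM deltaM delta_toLC mul0r add0r !mxE.
Qed.

Lemma act_ratfun_jacobian : map_mx act J *m invmx_const = J.
Proof.
rewrite -[LHS]mulmx1 -(mulmx1C jacobian_dx_dz) !mulmxA -[_ *m dx_dz]mulmxA.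
by rewrite -act_ratfun_dx_dz -map_mxM jacobian_dx_dz map_mx1 mul1mx.
Qed.

Lemma act_ratfun_connection i : map_mx act (connection i) = connection i.
Proof.
have act_deltaJ : map_mx act (map_mx (delta i) J) = map_mx (delta i) (map_mx act J).
  by apply/matrixP => a b; rewrite !mxE act_ratfun_delta.
have delta_const : map_mx (delta i) invmx_const = 0.
  by apply/matrixP => a b; rewrite !mxE delta_toLC.
rewrite /connection invmx_jacobian map_mxM act_ratfun_dx_dz mulmxA.
congr (_ *m _); rewrite act_deltaJ -[in RHS]act_ratfun_jacobian.
by rewrite map_mx_deriv_mul ?delta_const ?mulmx0 ?addr0 //; [exact: deltaD | exact: deltaM].
Qed.

End GaloisAction.

Definition partial_x (j : 'I_n) (f : L) : L := \sum_i J i j * delta i f.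

Lemma partial_xM j a b : partial_x j (a * b) = partial_x j a * b + a * partial_x j b.
Proof.
rewrite /partial_x mulr_suml mulr_sumr -big_split; apply: eq_bigr => i _ /=.
by rewrite deltaM mulrDr mulrA mulrCA.
Qed.

Lemma partial_x_toL j p : partial_x j (toL p) = toL p^`M(j).
Proof.
have XJ := @mulmx1C L n _ _ jacobian_dx_dz.
have sumXJ k :
    \sum_i J i j * (toL p^`M(k) * delta i (toL 'X_k)) = toL p^`M(k) * (k == j)%:R.
  move/matrixP/(_ k j): XJ; rewrite !mxE => <-; rewrite mulr_sumr.
  by apply: eq_bigr => i _; rewrite !mxE mulrCA; congr (_ * _); exact: mulrC.
rewrite /partial_x; under eq_bigr => i _ do rewrite delta_chain mulr_sumr.
rewrite exchange_big /= (eq_bigr _ (fun k _ => sumXJ k)) (bigD1 j) //= eqxx mulr1.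
by rewrite big1 ?addr0 // => k /negPf ->; rewrite mulr0.
Qed.

Lemma delta_constants_inK : [pchar C] =i pred0 ->
  forall c, (forall i, delta i c = 0) -> inK phi c.
Proof.
move=> C0 c c0.
have [|a ->] := partial_deriv_eq0_const C0 partial_xM partial_x_toL (f := c).
  by move=> j; rewrite /partial_x big1 // => i _; rewrite c0 mulr0.
by exists a%:MP, 1; rewrite evphi1 oner_neq0 divr1 /evphi comp_mpolyC.
Qed.

Lemma jacobian_generates : (forall a, exists d, tnth phi a \is d.-homog) ->
  forall F : L -> Prop, is_subfield F -> (forall f, inK phi f -> F f) ->
  (forall a b, F (J a b)) -> forall f, F f.
Proof.
move=> phi_homog F FF FK FJ; have toLK p : F (toL (comp_mpoly phi p)).
  by apply: FK; exists p, 1; rewrite evphi1 oner_neq0 divr1.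
apply: subfield_ratfun => // [c|k].
  by have := toLK c%:MP; rewrite comp_mpolyC.
pose x : 'cV[L]_n := \col_k toL 'X_k.
have -> : toL 'X_k = (invmx J *m (J *m x)) k 0 by rewrite (mulKmx unitmx_jacobian) mxE.
rewrite mxE; apply: subfield_sum => // a; apply: subfieldM => //.
  exact: subfield_invmx.
have [d phid] := phi_homog a.
have -> : (J *m x) a 0 = toL (d%:R * tnth phi a).
  rewrite mxE -mpolyC_nat mul_mpolyC -(mpoly_euler phid) rmorph_sum.
  by apply: eq_bigr => c _; rewrite !mxE rmorphM mulrC.
by have := toLK (d%:R * 'X_a); rewrite rmorphM rmorph_nat /= comp_mpolyXU -tnth_nth.
Qed.

End Connection.

Theorem theorem4p1 (R : realType) (n : nat) (G : seq 'M[complex R]_n)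
    (phi : n.-tuple {mpoly (complex R)[n]})
    (delta : 'I_n -> ratfun (complex R) n -> ratfun (complex R) n) :
  complex_reflection_group G ->
  fundamental_invariants G phi ->
  (forall i, is_derivation (delta i) /\ extends_dz phi i (delta i)) ->
  let J := jacobian phi in
  let A := fun i : 'I_n => map_mx (delta i) J *m invmx J in
  [/\ forall i (a b : 'I_n), inK phi (A i a b),
      forall i j : 'I_n,
        map_mx (delta i) (A j) - map_mx (delta j) (A i) = A i *m A j - A j *m A i
    & picard_vessiot (inK phi) delta A].
Proof.
move=> [G1 GM GV _] [phi_homog phi_inv _ SG] hdelta J A.
have delta_der i : is_derivation (delta i) by case: (hdelta i).
have delta_dz i : extends_dz phi i (delta i) by case: (hdelta i).
have Ju := unitmx_jacobian delta_der delta_dz.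
have C0 : [pchar (complex R)] =i pred0 by apply/pcharf0P => k; exact: Num.Theory.pnatr_eq0.
split.
- move=> i a b; apply: (invariant_ratfun_inK G1 GM GV (fun f => (SG f).1)) => M GM_M.
  have := act_ratfun_connection delta_der delta_dz (GV M GM_M).1 (fun a => phi_inv a M GM_M) i.
  by move/matrixP/(_ a b); rewrite mxE.
- exact: connection_integrable.
- split=> [c|].
    split=> [c0|[]//]; split=> //; exact: delta_constants_inK.
  exists J; split=> [|i|]; first exact: Ju.
    by rewrite /A -mulmxA (mulVmx Ju) mulmx1.
  exact: jacobian_generates.
Qed.
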